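(* Let $F:\mathbb{R}^n\rightrightarrows\mathbb{R}^n$ be upper semicontinuous with $F(x)$ nonempty, compact and convex for all $x$, and consider $\Sigma:\dot x\in F(x)$. A closed set $K\subset\mathbb{R}^n$ is forward invariant for $\Sigma$ if $$F(x)\subset T_K(y)\qquad\forall x\in\mathbb{R}^n\setminus K,\ \forall y\in\mathrm{Proj}_K(x).$$
   Context: A closed set $K$ is forward invariant for $\Sigma$ if every solution (locally absolutely continuous $\phi$ with $\dot\phi(t)\in F(\phi(t))$ a.e.) starting in $K$ satisfies $\phi(\mathrm{dom}\,\phi)\subset K$. $\mathrm{Proj}_K(x):=\{y\in K:|x-y|=\inf_{z\in K}|x-z|\}$. $T_K(y)$ denotes the contingent (Bouligand tangent) cone to $K$ at $y$: $T_K(y):=\{v\in\mathbb{R}^n:\liminf_{h\to0^+}\frac{|y+hv|_K}{h}=0\}$, where $|z|_K$ is the distance from $z$ to $K$. *)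

From HB Require Import structures.
From mathcomp Require Import all_boot all_order all_algebra.
From mathcomp Require Import all_classical all_reals all_analysis.
Set Implicit Arguments. Unset Strict Implicit. Unset Printing Implicit Defensive.
Import Order.TTheory GRing.Theory Num.Theory.
Import numFieldNormedType.Exports.
Local Open Scope classical_set_scope.
Local Open Scope ring_scope.

Section Defs.
Variables (R : realType) (n : nat).
Local Notation V := 'rV[R]_n.

Definition enorm (x : V) : R := Num.sqrt (\sum_(i < n) (x ord0 i) ^+ 2).

Definition dist_set (K : set V) (z : V) : R := inf [set enorm (z - y) | y in K].

Definition Proj (K : set V) (x : V) : set V :=
  [set y | K y /\ enorm (x - y) = dist_set K x].

(* Contingent cone: liminf_{h -> 0+} |y + h v|_K / h = 0.  Since the quotient
   is nonnegative, this is: for all eps, delta > 0 there is h in (0, delta)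
   with |y + h v|_K / h < eps. *)
Definition tangent_cone (K : set V) (y : V) : set V :=
  [set v | forall eps delta : R, 0 < eps -> 0 < delta ->
     exists h : R, [/\ 0 < h, h < delta & dist_set K (y + h *: v) / h < eps]].

Definition usc (F : V -> set V) : Prop :=
  forall x (U : set V), open U -> F x `<=` U -> \forall y \near x, F y `<=` U.

Definition abs_cont_on (phi : R -> V) (a b : R) : Prop :=
  forall eps : R, 0 < eps -> exists2 delta : R, 0 < delta &
    forall (k : nat) (s t : nat -> R),
      (forall i, (i < k)%N -> a <= s i /\ s i <= t i /\ t i <= b) ->
      (forall i j, (i < k)%N -> (j < k)%N -> i <> j -> t i <= s j \/ t j <= s i) ->
      \sum_(i < k) (t i - s i) < delta ->
      \sum_(i < k) enorm (phi (t i) - phi (s i)) < eps.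

Definition loc_abs_cont (I : set R) (phi : R -> V) : Prop :=
  forall a b, I a -> I b -> abs_cont_on phi a b.

Definition is_solution (F : V -> set V) (I : set R) (phi : R -> V) : Prop :=
  [/\ is_interval I, loc_abs_cont I phi &
      {ae (@lebesgue_measure R), forall t, I t ->
          derivable phi t 1 /\ F (phi t) ('D_1 phi t)}].

Definition forward_invariant (F : V -> set V) (K : set V) : Prop :=
  forall (I : set R) (phi : R -> V) (t0 : R),
    I t0 -> (forall t, I t -> t0 <= t) -> is_solution F I phi ->
    K (phi t0) -> forall t, I t -> K (phi t).

End Defs.

From HB Require Import structures.
From mathcomp Require Import all_boot all_order all_algebra.
From mathcomp Require Import all_classical all_reals all_analysis.
From mathcomp Require Import ring lra.
Import Order.TTheory GRing.Theory Num.Theory.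
Import numFieldNormedType.Exports.
Local Open Scope classical_set_scope.
Local Open Scope ring_scope.
Set Implicit Arguments. Unset Strict Implicit. Unset Printing Implicit Defensive.

(* Let D(s) be the distance from phi(s) to K.  If y is a nearest point of
   x = phi(s) in K and v = phi'(s) lies in F(x), hence is tangent to K at y,
   then <x - y, v> <= 0: otherwise points of K near y + h v would be closer to x
   than y.  Expanding |phi(s + h) - y|^2 then shows that D^2 has a nonpositive
   upper right Dini derivative at almost every s.  The increments of D^2 are
   dominated by those of the absolutely continuous phi, so D^2 cannot increase:
   cover the exceptional null set by an open set of small measure and run a real
   induction bounding the growth of D^2 by eps (s - t0) plus the variation of phi
   over the time spent in the cover.  Hence D stays 0. *)

Section Euclidean.
Variables (R : realType) (n : nat).
Local Notation V := 'rV[R]_n.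
Implicit Types a b c : V.

Definition dot a b : R := \sum_(i < n) a ord0 i * b ord0 i.

Lemma dotC a b : dot a b = dot b a.
Proof. by apply: eq_bigr => i _; rewrite mulrC. Qed.

Lemma dotDl a b c : dot (a + b) c = dot a c + dot b c.
Proof. by rewrite /dot -big_split; apply: eq_bigr => i _; rewrite !mxE mulrDl. Qed.

Lemma dot0l c : dot 0 c = 0.
Proof. by rewrite /dot big1 // => i _; rewrite mxE mul0r. Qed.

Lemma dotZl (k : R) a c : dot (k *: a) c = k * dot a c.
Proof. by rewrite /dot mulr_sumr; apply: eq_bigr => i _; rewrite !mxE mulrA. Qed.

Lemma dotNl a c : dot (- a) c = - dot a c.
Proof. by rewrite -scaleN1r dotZl mulN1r. Qed.

Lemma dotDr a b c : dot c (a + b) = dot c a + dot c b.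
Proof. by rewrite dotC dotDl !(dotC c). Qed.

Lemma dotZr (k : R) a c : dot c (k *: a) = k * dot c a.
Proof. by rewrite dotC dotZl dotC. Qed.

Lemma dotNr a c : dot c (- a) = - dot c a.
Proof. by rewrite dotC dotNl dotC. Qed.

Lemma dotvv_ge0 a : 0 <= dot a a.
Proof. by apply: sumr_ge0 => i _; rewrite -expr2 sqr_ge0. Qed.

Lemma dotvv_eq0 a : dot a a = 0 -> dot a =1 fun=> 0.
Proof.
move=> /eqP; rewrite psumr_eq0 => [/allP a0 b|i _]; last by rewrite -expr2 sqr_ge0.
rewrite /dot big1 // => i _.
have /implyP/(_ isT) := a0 i (mem_index_enum i).
by rewrite -expr2 sqrf_eq0 => /eqP->; rewrite mul0r.
Qed.

(* The discriminant argument: [0 <= dot (a - l *: b) (a - l *: b)]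
   for [l = dot a b / dot b b]. *)
Lemma dot_sqr_le a b : dot a b ^+ 2 <= dot a a * dot b b.
Proof.
have [b0|b0] := eqVneq (dot b b) 0.
  by rewrite dotC (dotvv_eq0 b0) b0 expr0n mulr0.
have bpos : 0 < dot b b by rewrite lt_def b0 dotvv_ge0.
set l := dot a b / dot b b.
have := dotvv_ge0 (a - l *: b).
rewrite !(dotDl, dotDr, dotNl, dotNr, dotZl, dotZr) (dotC b a) => h.
rewrite -subr_ge0.
suff -> : dot a a * dot b b - dot a b ^+ 2 =
  dot b b * (dot a a - l * dot a b + (- (l * dot a b) - l * - (l * dot b b))).
  by rewrite mulr_ge0 // ltW.
by rewrite /l; field.
Qed.

Lemma enormE a : enorm a = Num.sqrt (dot a a).
Proof. by congr Num.sqrt; apply: eq_bigr => i _; rewrite expr2. Qed.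

Lemma enorm_ge0 a : 0 <= enorm a.
Proof. by rewrite enormE sqrtr_ge0. Qed.

Lemma enorm_sqr a : enorm a ^+ 2 = dot a a.
Proof. by rewrite enormE sqr_sqrtr // dotvv_ge0. Qed.

Lemma enorm_sqrD a b : enorm (a + b) ^+ 2 = enorm a ^+ 2 + 2 * dot a b + enorm b ^+ 2.
Proof. by rewrite !enorm_sqr dotDl !dotDr (dotC b a); ring. Qed.

Lemma dot_le_enorm a b : dot a b <= enorm a * enorm b.
Proof.
have [ab0|ab0] := lerP (dot a b) 0; first by rewrite (le_trans ab0) ?mulr_ge0 ?enorm_ge0.
rewrite !enormE -sqrtrM ?dotvv_ge0 // -(ger0_norm (ltW ab0)) -sqrtr_sqr.
by rewrite ler_sqrt ?mulr_ge0 ?dotvv_ge0 // dot_sqr_le.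
Qed.

Lemma enormD a b : enorm (a + b) <= enorm a + enorm b.
Proof.
rewrite -(@ler_pXn2r _ 2) ?nnegrE ?addr_ge0 ?enorm_ge0 //.
by rewrite enorm_sqrD sqrrD; have := dot_le_enorm a b; lra.
Qed.

Lemma enormZ (k : R) a : enorm (k *: a) = `|k| * enorm a.
Proof. by rewrite !enormE dotZl dotZr mulrA -expr2 sqrtrM ?sqr_ge0 // sqrtr_sqr. Qed.

Lemma enormN a : enorm (- a) = enorm a.
Proof. by rewrite -scaleN1r enormZ normrN1 mul1r. Qed.

Lemma enorm_sym a b : enorm (a - b) = enorm (b - a).
Proof. by rewrite -enormN opprB. Qed.

Lemma enorm0 : enorm (0 : V) = 0.
Proof. by rewrite -(scale0r (0 : V)) enormZ normr0 mul0r. Qed.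

Lemma enorm_sub_triangle a b c : enorm (a - c) <= enorm (a - b) + enorm (b - c).
Proof. by rewrite -(subrKA b) enormD. Qed.

Lemma mx_norm_le_enorm a : `|a| <= enorm a.
Proof.
rewrite [leLHS]/Num.norm /= mx_normrE; apply/bigmax_leP; split; first exact: enorm_ge0.
move=> [i j] _ /=; rewrite (ord1 i) enormE -sqrtr_sqr ler_sqrt ?dotvv_ge0 //.
by rewrite /dot (bigD1 j) //= -expr2 lerDl sumr_ge0 // => k _; rewrite -expr2 sqr_ge0.
Qed.

Lemma enorm_le_mx_norm a : enorm a <= n.+1%:R * `|a|.
Proof.
rewrite enormE -(ger0_norm (_ : 0 <= n.+1%:R * `|a|)) ?mulr_ge0 // -sqrtr_sqr.
rewrite ler_sqrt ?sqr_ge0 // (@le_trans _ _ (\sum_(i < n) `|a| ^+ 2)) //.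
  apply: ler_sum => i _; rewrite -expr2 -real_normK ?num_real // lerXn2r ?nnegrE //.
  rewrite [leRHS]/Num.norm /= mx_normrE.
  exact: (@le_bigmax _ _ _ 0 (fun ij : 'I_1 * 'I_n => `|a ij.1 ij.2|) (ord0, i)).
rewrite sumr_const card_ord exprMn -[_ *+ n]mulr_natl; apply: ler_wpM2r; first exact: sqr_ge0.
by rewrite -natrX ler_nat (leq_trans (leqnSn n)) // expnS expn1 leq_pmulr.
Qed.

Lemma enorm_continuous : continuous (@enorm R n).
Proof.
move=> x; apply/(@cvgrPdist_lt _ _ _ (nbhs x) (nbhs_filter x)) => e e0.
apply/nbhs_ballP.
exists (e / n.+1%:R); first by rewrite /= divr_gt0.
move=> y; rewrite -ball_normE /= => xy.
have lip : `|enorm x - enorm y| <= enorm (x - y).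
  have := enorm_sub_triangle x y 0; have := enorm_sub_triangle y x 0.
  rewrite !subr0 enorm_sym ler_norml => ? ?; apply/andP; split; lra.
apply: le_lt_trans lip (le_lt_trans (enorm_le_mx_norm _) _).
by rewrite mulrC -ltr_pdivlMr.
Qed.

End Euclidean.

Section Distance.
Variables (R : realType) (n : nat) (K : set 'rV[R]_n).
Local Notation V := 'rV[R]_n.
Implicit Types a b y z : V.

Lemma dist_set_ge0 z : 0 <= dist_set K z.
Proof.
have [->|/set0P[y Ky]] := eqVneq K set0; first by rewrite /dist_set image_set0 inf0.
by apply: lb_le_inf => [|_ [w _ <-]]; [exists (enorm (z - y)), y | exact: enorm_ge0].
Qed.

Lemma dist_set_le z y : K y -> dist_set K z <= enorm (z - y).
Proof. by move=> Ky; apply: ge_inf; [exists 0 => _ [w _ <-]; exact: enorm_ge0 | exists y]. Qed.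

Lemma dist_set_lt z c : K !=set0 -> dist_set K z < c -> exists2 y, K y & enorm (z - y) < c.
Proof.
move=> [y0 Ky0] /inf_lt[]; first by exists (enorm (z - y0)), y0.
by move=> _ [y Ky <-]; exists y.
Qed.

Lemma dist_set_lipschitz a b : dist_set K a <= dist_set K b + enorm (a - b).
Proof.
have [->|/set0P[y0 Ky0]] := eqVneq K set0.
  by rewrite /dist_set !image_set0 inf0 add0r enorm_ge0.
rewrite -lerBlDr; apply: lb_le_inf; first by exists (enorm (b - y0)), y0.
move=> _ [y Ky <-]; rewrite lerBlDr addrC.
exact: le_trans (dist_set_le a Ky) (enorm_sub_triangle a b y).
Qed.

Lemma dist_set_in z : K z -> dist_set K z = 0.
Proof.
move=> Kz; apply/le_anti; rewrite dist_set_ge0 andbT.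
by have := dist_set_le z Kz; rewrite subrr enorm0.
Qed.

Lemma closed_dist_set_eq0 z : closed K -> K !=set0 -> dist_set K z = 0 -> K z.
Proof.
move=> cK K0 dz; apply: cK => B /nbhs_ballP[e e0 sB].
have [y Ky zy] : exists2 y, K y & enorm (z - y) < e by apply: dist_set_lt; rewrite ?dz.
exists y; split => //; apply: sB; rewrite -ball_normE /=.
exact: le_lt_trans (mx_norm_le_enorm _) zy.
Qed.

Lemma closed_Proj_neq0 z : closed K -> K !=set0 -> Proj K z !=set0.
Proof.
move=> cK K0; set d := dist_set K z.
have dist_cont : continuous (fun y => enorm (z - y)).
  move=> y; apply: (@continuous_comp _ _ _ (fun y => z - y) (@enorm R n)).
    by apply: (@cvgB _ _ _ _ (nbhs_filter y)); [exact: cvg_cst | exact: cvg_id].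
  exact: enorm_continuous.
pose A := K `&` [set y | enorm (z - y) <= d + 1].
have [y0 Ky0 zy0] : exists2 y, K y & enorm (z - y) < d + 1.
  by apply: dist_set_lt; rewrite ?ltrDl.
have A0 : A !=set0 by exists y0; split => //; exact: ltW.
have cA : compact A.
  apply: bounded_closed_compact.
    exists (enorm z + d + 1); split; first exact: num_real.
    move=> M zM y [_ zy] /=; apply: le_trans (mx_norm_le_enorm _) _.
    have := enorm_sub_triangle y z 0; rewrite !subr0 enorm_sym => yz.
    by apply/ltW/(le_lt_trans _ zM)/(le_trans yz); rewrite addrC -addrA lerD2l.
  apply: closedI => //.
  exact: (preimage_closed (fun y _ => dist_cont y) (@closed_le _ (d + 1))).
have [y /set_mem[Ky zy] ymin] := compact_EVT_min A0 cA (continuous_subspaceT dist_cont).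
exists y; split => //; apply/le_anti; rewrite dist_set_le // andbT.
apply: lb_le_inf; first by exists (enorm (z - y0)), y0.
move=> _ [w Kw <-]; have [zw|zw] := lerP (enorm (z - w)) (d + 1).
  by apply: ymin; apply/mem_set.
exact: le_trans zy (ltW zw).
Qed.

End Distance.

Lemma exists_mul_le (R : realFieldType) (D k : R) : 0 <= D -> 0 < k ->
  exists e, [/\ 0 < e, e <= 1 & D * e <= k].
Proof.
move=> D0 k0; have D1 : 0 < D + 1 by rewrite ltr_wpDl.
exists (Num.min 1 (k / (D + 1))); split; first by rewrite lt_min ltr01 divr_gt0.
  by rewrite ge_min lexx.
apply: le_trans (_ : D * (k / (D + 1)) <= k).
  by rewrite ler_wpM2l // ge_min lexx orbT.
rewrite mulrCA; apply: ler_piMr; first exact: ltW.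
by rewrite ler_pdivrMr // mul1r lerDl.
Qed.

Section ProximalNormal.
Variables (R : realType) (n : nat).
Local Notation V := 'rV[R]_n.
Implicit Types p v w x y z : V.

Lemma enorm_sqr_perturb p v w (h e : R) : 0 <= h -> e <= 1 -> enorm w <= e * h ->
  enorm (p + (h *: v + w)) ^+ 2 <=
    enorm p ^+ 2 + 2 * h * dot p v + 2 * enorm p * e * h + (h * (1 + enorm v)) ^+ 2.
Proof.
move=> h0 e1 we; rewrite enorm_sqrD dotDr dotZr.
have pw : dot p w <= enorm p * (e * h).
  exact: le_trans (dot_le_enorm p w) (ler_wpM2l (enorm_ge0 p) we).
have hvw : enorm (h *: v + w) <= h * (1 + enorm v).
  apply: le_trans (enormD _ _) _; rewrite enormZ ger0_norm //.
  by have := ler_wpM2r h0 e1; lra.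
have sq : enorm (h *: v + w) ^+ 2 <= (h * (1 + enorm v)) ^+ 2.
  by rewrite lerXn2r ?nnegrE ?enorm_ge0 ?mulr_ge0 ?addr_ge0 ?enorm_ge0.
by nra.
Qed.

Lemma Proj_tangent_dot_le0 (K : set V) x y v :
  Proj K x y -> tangent_cone K y v -> dot (x - y) v <= 0.
Proof.
move=> [Ky xy] Tv; rewrite leNgt; apply/negP => c0.
set c := dot (x - y) v in c0; set D := enorm (x - y).
have [e [e0 e1 De]] := exists_mul_le (enorm_ge0 (x - y)) (divr_gt0 c0 (ltr0n R 4)).
have N1 : 0 < (1 + enorm v) ^+ 2 by rewrite exprn_gt0 // ltr_wpDr ?enorm_ge0.
have [h [h0 hc hd]] := Tv e _ e0 (divr_gt0 c0 N1).
have [z Kz yz] : exists2 z, K z & enorm (y + h *: v - z) < e * h.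
  by apply: dist_set_lt; [exists y | rewrite -ltr_pdivrMr].
have := enorm_sqr_perturb (x - y) (- v) (ltW h0) e1 (ltW yz).
have -> : x - y + (h *: - v + (y + h *: v - z)) = x - z.
  by apply/rowP => i; rewrite !mxE; ring.
rewrite dotNr enormN -/c -/D.
have Dxz : D ^+ 2 <= enorm (x - z) ^+ 2.
  by rewrite lerXn2r ?nnegrE ?enorm_ge0 // /D xy dist_set_le.
have hN : (h * (1 + enorm v)) ^+ 2 < h * c.
  by rewrite exprMn expr2 -mulrA ltr_pM2l // -ltr_pdivlMr.
have hDe : D * e * h <= c / 4 * h by rewrite ler_wpM2r // ltW.
by nra.
Qed.

Lemma Proj_dist_sqr_le (K : set V) x y v (eps : R) :
  Proj K x y -> dot (x - y) v <= 0 -> 0 < eps ->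
  exists2 eta : R, 0 < eta & exists2 r : R, 0 < r &
    forall h : R, 0 < h -> h < r -> forall z, enorm (z - (x + h *: v)) <= eta * h ->
      dist_set K z ^+ 2 <= dist_set K x ^+ 2 + eps * h.
Proof.
move=> [Ky xy] xyv eps0.
have [eta [eta0 eta1 Deta]] := exists_mul_le (dist_set_ge0 K x) (divr_gt0 eps0 (ltr0n R 4)).
have N1 : 0 < 2 * (1 + enorm v) ^+ 2 by rewrite mulr_gt0 // exprn_gt0 // ltr_wpDr ?enorm_ge0.
exists eta => //; exists (eps / (2 * (1 + enorm v) ^+ 2)); first by rewrite divr_gt0.
move=> h h0 hr z zxv.
have := enorm_sqr_perturb (x - y) v (ltW h0) eta1 zxv.
have -> : x - y + (h *: v + (z - (x + h *: v))) = z - y.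
  by apply/rowP => i; rewrite !mxE; ring.
rewrite xy => zy.
have dz : dist_set K z ^+ 2 <= enorm (z - y) ^+ 2.
  by rewrite lerXn2r ?nnegrE ?dist_set_ge0 ?enorm_ge0 ?dist_set_le.
have hN : (h * (1 + enorm v)) ^+ 2 <= h * (eps / 2).
  rewrite exprMn expr2 -mulrA ler_pM2l // -ler_pdivlMr ?exprn_gt0 ?ltr_wpDr ?enorm_ge0 //.
  by rewrite -mulrA -invfM ltW.
have hDe : dist_set K x * eta * h <= eps / 4 * h by rewrite ler_wpM2r // ltW.
have hv : h * dot (x - y) v <= 0 by rewrite mulr_ge0_le0 // ltW.
by nra.
Qed.

Lemma tangent_dist_sqr_le (K : set V) x v (eps : R) : closed K -> K !=set0 ->
  (~ K x -> forall y, Proj K x y -> tangent_cone K y v) -> 0 < eps ->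
  exists2 eta : R, 0 < eta & exists2 r : R, 0 < r &
    forall h : R, 0 < h -> h < r -> forall z, enorm (z - (x + h *: v)) <= eta * h ->
      dist_set K z ^+ 2 <= dist_set K x ^+ 2 + eps * h.
Proof.
move=> cK K0 tanK eps0.
have [y xy xyv] : exists2 y, Proj K x y & dot (x - y) v <= 0.
  have [Kx|nKx] := pselect (K x).
    by exists x; [split; rewrite ?subrr ?enorm0 ?dist_set_in | rewrite subrr dot0l].
  have [y xy] := closed_Proj_neq0 x cK K0.
  by exists y => //; apply: Proj_tangent_dot_le0 xy (tanK nKx y xy).
exact: Proj_dist_sqr_le xy xyv eps0.
Qed.

End ProximalNormal.

Section Solution.
Variables (R : realType) (n : nat).
Local Notation V := 'rV[R]_n.

Lemma derivable_approx (phi : R -> V) s : derivable phi s 1 -> forall eta : R, 0 < eta ->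
  exists2 r : R, 0 < r & forall h : R, 0 < h -> h < r ->
    enorm (phi (s + h) - (phi s + h *: 'D_1 phi s)) <= eta * h.
Proof.
move=> ds eta eta0.
have : (fun h : R => h^-1 *: ((phi \o shift s) (h *: 1) - phi s)) @ 0^' --> 'D_1 phi s := ds.
move=> /cvgrPdist_lt /(_ _ (divr_gt0 eta0 (ltr0n R n.+1))) /nbhs_ballP[r r0 near_s].
exists r => // h h0 hr.
have hb : ball 0 r h by rewrite -ball_normE /= sub0r normrN ger0_norm ?ltW.
have := near_s h hb (negbT (gt_eqF h0)); rewrite /= [_%:A]mulr1 [h + s]addrC => dq.
have -> : phi (s + h) - (phi s + h *: 'D_1 phi s) =
    - (h *: ('D_1 phi s - h^-1 *: (phi (s + h) - phi s))).
  by apply/rowP => i; rewrite !mxE; field; rewrite gt_eqF.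
rewrite enormN enormZ ger0_norm ?(ltW h0) // mulrC ler_pM2r //.
by apply/ltW/(le_lt_trans (enorm_le_mx_norm _)); rewrite mulrC -ltr_pdivlMr.
Qed.

Lemma dist_sqr_right_dini (K : set V) (phi : R -> V) s : closed K -> K !=set0 ->
  derivable phi s 1 ->
  (~ K (phi s) -> forall y, Proj K (phi s) y -> tangent_cone K y ('D_1 phi s)) ->
  forall eps : R, 0 < eps -> exists2 r : R, 0 < r & forall h : R, 0 < h -> h < r ->
    dist_set K (phi (s + h)) ^+ 2 <= dist_set K (phi s) ^+ 2 + eps * h.
Proof.
move=> cK K0 ds tanK eps eps0.
have [eta eta0 [r1 r10 dist_le]] := tangent_dist_sqr_le cK K0 tanK eps0.
have [r2 r20 phi_le] := derivable_approx ds eta0.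
exists (Num.min r1 r2) => [|h h0]; first by rewrite lt_min r10.
by rewrite lt_min => /andP[hr1 hr2]; apply: dist_le (phi_le h h0 hr2).
Qed.

End Solution.

Section AbsCont.
Variables (R : realType) (n : nat) (phi : R -> 'rV[R]_n) (a b : R).
Hypothesis phi_ac : abs_cont_on phi a b.

Lemma abs_cont_on_small (g : R) : 0 < g ->
  exists2 rho : R, 0 < rho & forall u v, a <= u -> u <= v -> v <= b -> v - u < rho ->
    enorm (phi v - phi u) < g.
Proof.
move=> g0; have [rho rho0 ac] := phi_ac g0; exists rho => // u v au uv vb vu.
have := ac 1%N (fun=> u) (fun=> v) (fun _ _ => conj au (conj uv vb)) _ _.
by rewrite !big_ord1; apply => // i j; rewrite !ltnS !leqn0 => /eqP-> /eqP->.
Qed.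

Lemma abs_cont_on_bounded :
  exists M : R, forall s, a <= s -> s <= b -> enorm (phi s - phi a) <= M.
Proof.
have [rho rho0 small] := abs_cont_on_small ltr01.
have rho2 : 0 < rho / 2 by rewrite divr_gt0.
have step (k : nat) s : a <= s -> s <= b -> s - a <= k%:R * (rho / 2) ->
    enorm (phi s - phi a) <= k%:R.
  elim: k s => [|k IH] s sa sb sk.
    have -> : s = a by apply/le_anti; rewrite sa andbT -subr_le0 -(mul0r (rho / 2)).
    by rewrite subrr enorm0.
  set u := Num.max a (s - rho / 2).
  have au : a <= u by rewrite le_max lexx.
  have us : u <= s by rewrite ge_max sa gerBl ltW.
  have su : s - u < rho.
    have : s - rho / 2 <= u by rewrite le_max lexx orbT.
    lra.
  rewrite -natr1 mulrDl mul1r in sk *.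
  have ua : u - a <= k%:R * (rho / 2).
    by rewrite lerBlDl ge_max lerDl mulr_ge0 ?ler0n ?(ltW rho2) //=; lra.
  have := IH u au (le_trans us sb) ua; have := small u s au us sb su.
  by have := enorm_sub_triangle (phi s) (phi u) (phi a); lra.
have [ab|ba] := lerP a b; last first.
  by exists 0 => s sa sb; have := lt_le_trans ba (le_trans sa sb); rewrite ltxx.
exists (Num.Def.archi_bound ((b - a) / (rho / 2)))%:R => s sa sb.
apply: step => //; apply: le_trans (_ : b - a <= _); first by rewrite lerD2r.
rewrite -ler_pdivrMr //; apply/ltW/archi_boundP.
by rewrite divr_ge0 ?subr_ge0 // ltW.
Qed.

End AbsCont.

Section IntervalFamily.
Variables (R : realType) (U : set R) (a : R).

Definition interval_family (s : R) (k : nat) (sf tf : nat -> R) : Prop :=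
  (forall i, (i < k)%N ->
     [/\ a <= sf i, sf i <= tf i, tf i <= s & [set x | sf i <= x <= tf i] `<=` U]) /\
  (forall i j, (i < k)%N -> (j < k)%N -> i <> j -> tf i <= sf j \/ tf j <= sf i).

Lemma interval_family_widen s s' k sf tf :
  interval_family s k sf tf -> s <= s' -> interval_family s' k sf tf.
Proof.
move=> [fam disj] ss'; split => // i /fam[? ? ts ?]; split => //.
exact: le_trans ts ss'.
Qed.

Lemma interval_family_rcons s t k sf tf :
  interval_family s k sf tf -> a <= s -> s <= t -> [set x | s <= x <= t] `<=` U ->
  let sf' i := if i == k then s else sf i in let tf' i := if i == k then t else tf i in
  interval_family t k.+1 sf' tf'.
Proof.
move=> [fam disj] sa st stU sf' tf'; split => [i|i j].
  rewrite ltnS leq_eqVlt /sf' /tf' => /predU1P[->|ik]; first by rewrite eqxx.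
  by have [? ? ts ?] := fam i ik; rewrite (ltn_eqF ik); split => //; apply: le_trans ts st.
rewrite /sf' /tf' ltnS leq_eqVlt => /predU1P[->|ik].
all: rewrite ltnS leq_eqVlt => /predU1P[->|jk] ij.
- by case: (ij erefl).
- by rewrite eqxx (ltn_eqF jk); right; have [_ _ ts _] := fam j jk.
- by rewrite eqxx (ltn_eqF ik); left; have [_ _ ts _] := fam i ik.
- by rewrite (ltn_eqF ik) (ltn_eqF jk); apply: disj.
Qed.

Lemma interval_family_lebesgue s k sf tf : measurable U -> interval_family s k sf tf ->
  ((\sum_(i < k) (tf i - sf i))%:E <= lebesgue_measure U)%E.
Proof.
move=> mU [fam disj].
pose I (i : 'I_k) := [set` Interval (BLeft (sf i)) (BLeft (tf i))].
have mI i : measurable (I i) by exact: measurable_itv.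
have tI : trivIset [set: 'I_k] I.
  move=> i j _ _ [x []]; rewrite /I /= !in_itv /= => /andP[si it] /andP[sj jt].
  apply/val_inj/eqP/negPn/negP => /eqP ij.
  have [ij'|ji'] := disj i j (ltn_ord i) (ltn_ord j) ij.
    by have := le_lt_trans (le_trans ij' sj) it; rewrite ltxx.
  by have := le_lt_trans (le_trans ji' si) jt; rewrite ltxx.
have lenI (i : 'I_k) : lebesgue_measure (I i) = (tf i - sf i)%:E.
  have [_ st _ _] := fam i (ltn_ord i).
  rewrite lebesgue_measure_itv /= lte_fin; case: ltgtP st => [_ _|//|-> _].
    by rewrite -EFinD.
  by rewrite subrr.
rewrite -sumEFin -(eq_bigr _ (fun i _ => lenI i)) -measure_bigsetU_ord //.
apply: le_measure; rewrite ?inE //; first by apply: bigsetU_measurable => i _; exact: mI.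
move=> x; elim/big_rec: _ => [[]|i S _ IH [|/IH//]].
rewrite /I /= in_itv /= => /andP[sx xt]; have [_ _ _ iU] := fam i (ltn_ord i).
by apply: iU; rewrite /= sx ltW.
Qed.

End IntervalFamily.

Definition variation (R : realType) (n : nat) (phi : R -> 'rV[R]_n) (k : nat)
  (sf tf : nat -> R) : R := \sum_(i < k) enorm (phi (tf i) - phi (sf i)).

Lemma variation_rcons (R : realType) (n : nat) (phi : R -> 'rV[R]_n) k sf tf (s t : R) :
  variation phi k.+1 (fun i => if i == k then s else sf i) (fun i => if i == k then t else tf i)
  = variation phi k sf tf + enorm (phi t - phi s).
Proof.
rewrite /variation big_ord_recr /= eqxx; congr (_ + _).
by apply: eq_bigr => i _; rewrite (ltn_eqF (ltn_ord i)).
Qed.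

Lemma abs_cont_variation_lt (R : realType) (n : nat) (phi : R -> 'rV[R]_n) (a b th : R) :
  abs_cont_on phi a b -> 0 < th -> exists2 del : R, 0 < del &
    forall U, measurable U -> (lebesgue_measure U < del%:E)%E ->
    forall s k sf tf, interval_family U a s k sf tf -> s <= b -> variation phi k sf tf < th.
Proof.
move=> ac th0; have [del del0 small] := ac _ th0; exists del => // U mU Udel s k sf tf fam sb.
apply: small; first by move=> i /fam.1[? ? ts _]; split => //; split => //; exact: le_trans ts sb.
  exact: fam.2.
by rewrite -lte_fin (le_lt_trans (interval_family_lebesgue mU fam)).
Qed.

Lemma lebesgue_null_open_cover (R : realType) (N : set R) (del : R) :
  measurable N -> lebesgue_measure N = 0%E -> 0 < del ->
  exists U, [/\ open U, N `<=` U & (lebesgue_measure U < del%:E)%E].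
Proof.
move=> mN N0 del0; have Nfin : (lebesgue_measure N < +oo)%E by rewrite N0 ltry.
have [U [oU NU UN]] := lebesgue_regularity_outer mN Nfin del0.
exists U; split => //; rewrite -(setDKU NU).
have mU := measurable_realfun.open_measurable oU.
apply: le_lt_trans (measureU2 lebesgue_measure (measurableD mU mN) mN) _.
have N0le : (lebesgue_measure N <= 0)%E by rewrite N0.
by apply: le_lt_trans (leeD2l _ N0le) _; rewrite adde0.
Qed.

Lemma real_induction (R : realType) (P : R -> Prop) (a b : R) : a <= b -> P a ->
  (forall s, a < s -> s <= b -> (forall t, a <= t -> t < s -> P t) -> P s) ->
  (forall s, a <= s -> s < b -> P s ->
     exists2 r : R, 0 < r & forall t, s < t -> t <= s + r -> t <= b -> P t) ->
  P b.
Proof.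
move=> ab Pa Pleft Pright.
pose S := [set t | a <= t <= b /\ forall s, a <= s -> s <= t -> P s].
have Sa : S a by split=> [|s sa sa']; [rewrite lexx | have -> : s = a by apply/le_anti/andP].
have supS : has_sup S by split; [exists a | exists b => t [/andP[]]].
set c := sup S.
have ac : a <= c by exact: sup_upper_bound.
have cb : c <= b by apply: ge_sup; [exists a | move=> t [/andP[]]].
have Pbelow t : a <= t -> t < c -> P t.
  move=> ta tc; have ct : 0 < c - t by rewrite subr_gt0.
  have [u [_ Pu]] := sup_adherent ct supS.
  by rewrite opprB addrC subrK => tu; apply: Pu => //; exact: ltW.
have Pc : P c.
  have [<-//|ac'] := eqVneq a c.
  by apply: Pleft => //; rewrite lt_def eq_sym ac' ac.
have Sc : S c.
  split=> [|s sa]; first by rewrite ac.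
  by rewrite le_eqVlt => /predU1P[->|sc] //; exact: Pbelow.
have [<-//|cb'] := eqVneq c b.
have {}cb' : c < b by rewrite lt_def eq_sym cb' cb.
have [r r0 Pr] := Pright c ac cb' Pc.
have : S (Num.min b (c + r)).
  split.
    by rewrite ge_min lexx le_min ab (le_trans ac) // lerDl ltW.
  move=> s sa; have [sc _|cs] := lerP s c; first exact: Sc.2.
  rewrite le_min => /andP[sb scr]; exact: Pr.
by move=> /(sup_upper_bound supS); rewrite -/c ge_min => /orP[]; lra.
Qed.

Lemma sqr_le_increment (R : realFieldType) (x y e M : R) : 0 <= x -> 0 <= y -> 0 <= e ->
  x <= M -> y <= M -> y <= x + e -> y ^+ 2 <= x ^+ 2 + 2 * M * e.
Proof. by move=> x0 y0 e0 xM yM yxe; have [yx|xy] := lerP y x; nra. Qed.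

Section DiniMonotone.
Variables (R : realType) (n : nat) (phi : R -> 'rV[R]_n) (f : R -> R) (a b C eps : R).
Variables (N U : set R).
Hypotheses (C0 : 0 <= C) (eps0 : 0 < eps) (oU : open U) (NU : N `<=` U).
Hypothesis phi_ac : abs_cont_on phi a b.
Hypothesis f_step : forall s t, a <= s -> s <= t -> t <= b ->
  f t <= f s + C * enorm (phi t - phi s).
Hypothesis f_dini : forall s, a <= s -> s < b -> ~ N s -> forall e : R, 0 < e ->
  exists2 r : R, 0 < r & forall h : R, 0 < h -> h < r -> f (s + h) <= f s + e * h.

Definition dini_bound (s : R) : Prop := forall eta : R, 0 < eta -> exists k sf tf,
  interval_family U a s k sf tf /\
  f s <= f a + eps * (s - a) + C * variation phi k sf tf + eta.

Lemma dini_bound_start : dini_bound a.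
Proof.
move=> eta eta0; exists 0%N, (fun=> a), (fun=> a); split; first by split.
by rewrite subrr /variation big_ord0 !mulr0 !addr0 lerDl ltW.
Qed.

Lemma dini_bound_left s : a < s -> s <= b -> (forall t, a <= t -> t < s -> dini_bound t) ->
  dini_bound s.
Proof.
move=> sa sb below eta eta0.
have C1 : 0 < C + 1 by rewrite ltr_wpDl.
have [rho rho0 small] := abs_cont_on_small phi_ac (divr_gt0 eta0 (mulr_gt0 (ltr0n R 2) C1)).
set u := Num.max a (s - rho / 2).
have au : a <= u by rewrite le_max lexx.
have us : u < s by rewrite gt_max sa ltrBlDr ltrDl divr_gt0.
have su : s - u < rho.
  have : s - rho / 2 <= u by rewrite le_max lexx orbT.
  lra.
have [k [sf [tf [fam fu]]]] := below u au us _ (divr_gt0 eta0 (ltr0n R 2)).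
exists k, sf, tf; split; first exact: interval_family_widen fam (ltW us).
have Cphi : C * enorm (phi s - phi u) <= eta / 2.
  have := small u s au (ltW us) sb su; have := enorm_ge0 (phi s - phi u).
  have -> : eta / 2 = (C + 1) * (eta / (2 * (C + 1))) by field; rewrite gt_eqF.
  nra.
have := f_step au (ltW us) sb.
have : eps * (u - a) <= eps * (s - a) by rewrite ler_pM2l // lerD2r ltW.
lra.
Qed.

Lemma dini_bound_right s : a <= s -> s < b -> dini_bound s ->
  exists2 r : R, 0 < r & forall t, s < t -> t <= s + r -> t <= b -> dini_bound t.
Proof.
move=> sa sb Ps.
have eps_mono t : s <= t -> eps * (s - a) <= eps * (t - a).
  by move=> st; rewrite ler_pM2l // lerD2r.
have [Ns|nNs] := pselect (N s).
  have /nbhs_ballP[r r0 sU] := oU (NU Ns).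
  exists (r / 2); first by rewrite divr_gt0.
  move=> t st tsr tb eta eta0; have [k [sf [tf [fam fs]]]] := Ps eta eta0.
  have stU : [set x | s <= x <= t] `<=` U.
    move=> x /andP[sx xt]; apply: sU; rewrite -ball_normE /= ler0_norm ?subr_le0 //.
    lra.
  exists k.+1; do 2 eexists; split; first exact: interval_family_rcons fam sa (ltW st) stU.
  rewrite variation_rcons; have := f_step sa (ltW st) tb; have := eps_mono t (ltW st).
  lra.
have [r r0 dini] := f_dini sa sb nNs eps0.
exists (r / 2); first by rewrite divr_gt0.
move=> t st tsr tb eta eta0; have [k [sf [tf [fam fs]]]] := Ps eta eta0.
exists k, sf, tf; split; first exact: interval_family_widen fam (ltW st).
have tsr' : t - s < r by lra.
have := dini (t - s) (_ : 0 < t - s) tsr'; rewrite subr_gt0 [s + (t - s)]addrC subrK => /(_ st).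
have : eps * (t - a) = eps * (s - a) + eps * (t - s) by ring.
lra.
Qed.

Lemma dini_bound_end : a <= b -> dini_bound b.
Proof.
move=> ab; apply: real_induction ab dini_bound_start _ _ => s sa sb.
  exact: dini_bound_left.
exact: dini_bound_right.
Qed.

End DiniMonotone.

Lemma dini_nonincreasing (R : realType) (n : nat) (phi : R -> 'rV[R]_n) (f : R -> R)
    (a b C : R) (N : set R) :
  a <= b -> 0 <= C -> abs_cont_on phi a b -> measurable N -> lebesgue_measure N = 0%E ->
  (forall s t, a <= s -> s <= t -> t <= b -> f t <= f s + C * enorm (phi t - phi s)) ->
  (forall s, a <= s -> s < b -> ~ N s -> forall e : R, 0 < e ->
     exists2 r : R, 0 < r & forall h : R, 0 < h -> h < r -> f (s + h) <= f s + e * h) ->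
  f b <= f a.
Proof.
move=> ab C0 ac mN N0 f_step f_dini; apply/ler_addgt0Pr => th th0.
have C3 : 0 < C + 3 by rewrite ltr_wpDl.
set e := th / (C + 3); have e0 : 0 < e by rewrite divr_gt0.
have [del del0 var_lt] := abs_cont_variation_lt ac e0.
have [U [oU NU Udel]] := lebesgue_null_open_cover mN N0 del0.
have ba1 : 0 < b - a + 1 by rewrite ltr_wpDl // subr_ge0.
have eps0 : 0 < e / (b - a + 1) by rewrite divr_gt0.
have [k [sf [tf [fam fb]]]] := dini_bound_end C0 eps0 oU NU ac f_step f_dini ab e0.
have := var_lt U (measurable_realfun.open_measurable oU) Udel b k sf tf fam (lexx b).
have : e / (b - a + 1) * (b - a) <= e.
  by rewrite mulrAC ler_pdivrMr // ler_pM2l // lerDl.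
have : th = C * e + 3 * e by rewrite /e; field; rewrite gt_eqF.
nra.
Qed.

Unset Implicit Arguments. Set Strict Implicit.

Theorem lemma16 (R : realType) (n : nat) (F : 'rV[R]_n -> set 'rV[R]_n)
  (K : set 'rV[R]_n) :
  usc F ->
  (forall x, F x !=set0) ->
  (forall x, compact (F x)) ->
  (forall x, convex_set (F x)) ->
  closed K ->
  (forall x, ~ K x -> forall y, Proj K x y -> F x `<=` tangent_cone K y) ->
  forward_invariant F K.
Proof.
move=> _ _ _ _ cK tanK I phi t0 It0 t0_min [Iint Iac [N [mN N0 solN]]] Kt0 t It.
have K0 : K !=set0 by exists (phi t0).
have ac := Iac t0 t It0 It.
have [M phiM] := abs_cont_on_bounded ac.
pose D s := dist_set K (phi s).
have D_le s : t0 <= s -> s <= t -> D s <= M.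
  move=> t0s st; have := dist_set_lipschitz K (phi s) (phi t0).
  by rewrite (dist_set_in Kt0) add0r => /le_trans; apply; exact: phiM.
have M0 : 0 <= M by have := phiM t0 (lexx t0) (t0_min t It); rewrite subrr enorm0.
apply: (closed_dist_set_eq0 cK K0); apply/eqP; rewrite -sqrf_eq0 eq_le sqr_ge0 andbT.
rewrite -[X in _ <= X](expr0n _ 2) -(dist_set_in Kt0).
apply: (@dini_nonincreasing _ _ phi (fun s => D s ^+ 2) t0 t (2 * M) N) => //.
- exact: t0_min.
- by rewrite mulr_ge0.
- move=> s u t0s su ut; apply: sqr_le_increment.
  + exact: dist_set_ge0.
  + exact: dist_set_ge0.
  + exact: enorm_ge0.
  + exact: D_le s t0s (le_trans su ut).
  + exact: D_le u (le_trans t0s su) ut.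
  + exact: dist_set_lipschitz.
- move=> s t0s st /(contra_not (@solN s)) /contrapT /(_ _) [|ds Fs].
    by apply: (Iint t0 t); rewrite // t0s ltW.
  apply: dist_sqr_right_dini cK K0 ds _ => nK y pKy.
  exact: tanK nK y pKy _ Fs.
Qed.
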